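(* Let $d\geq 2$ and $m\geq 1$ be integers. Let $\{e^d_k\}$ and $\{e^{d+m}_k\}$ be the standard bases of $\mathbb{C}^d$ and $\mathbb{C}^{d+m}$, and let $|J\rangle=\sum_{k=1}^d e^d_k\in\mathbb{C}^d$ be the all-ones vector. Define $d\times(d+m)$ matrices $$V_i=\sum_{k=1}^{d}|e^d_k\rangle\langle e^{d+m}_{\mathrm{mod}(k+i-2,\,d+1)+1}|\quad (i=1,\dots,d+1),\qquad V_i=|J\rangle\langle e^{d+m}_i|\quad (i=d+2,\dots,d+m),$$ where $\mathrm{mod}(a,n)\in\{0,\dots,n-1\}$ is the remainder of $a$ modulo $n$, and define the completely positive map $\Phi:M_d\to M_{d+m}$ by $$\Phi(X)=\frac{1}{d(d+m)}\sum_{i=1}^{d+m}V_i^\dagger XV_i .$$ Then $\Phi$ is entanglement breaking.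
   Context: $M_n$ denotes the complex $n\times n$ matrices. A completely positive map $\Phi:M_{d_1}\to M_{d_2}$ is entanglement breaking if $(\mathrm{id}_{M_n}\otimes\Phi)(\rho)$ is separable for every $n$ and every state $\rho$ on $\mathbb{C}^n\otimes\mathbb{C}^{d_1}$; equivalently, its Choi matrix $\sum_{r,s=1}^{d_1}E_{rs}\otimes\Phi(E_{rs})$ is separable. *)

From HB Require Import structures.
From mathcomp Require Import all_boot all_order all_algebra.
From mathcomp Require Import mxtens.
Set Implicit Arguments. Unset Strict Implicit. Unset Printing Implicit Defensive.
Import Order.TTheory GRing.Theory Num.Theory.
Local Open Scope ring_scope.

(* Complex numbers: any numClosedFieldType C (e.g. the genuine complex numbers
   R[i] over a real closed field R). *)

Section QInfo.
Variable C : numClosedFieldType.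

Definition adjmx {m n} (A : 'M[C]_(m, n)) : 'M[C]_(n, m) := (map_mx Num.conj A)^T.

Definition psdmx {n} (A : 'M[C]_n) : Prop :=
  adjmx A = A /\ forall v : 'cV[C]_n, 0 <= (adjmx v *m A *m v) 0 0.

Definition statemx {n} (rho : 'M[C]_n) : Prop := psdmx rho /\ \tr rho = 1.

(* separable operator on C^n1 (x) C^n2 (Kronecker ordering of tensmx):
   a finite sum of tensor products of positive semidefinite operators *)
Definition separable {n1 n2} (X : 'M[C]_(n1 * n2)) : Prop :=
  exists (N : nat) (A : 'I_N -> 'M[C]_n1) (B : 'I_N -> 'M[C]_n2),
    (forall k, psdmx (A k) /\ psdmx (B k)) /\ X = \sum_(k < N) (A k *t B k).

Definition blockmx {n d1} (rho : 'M[C]_(n * d1)) (a b : 'I_n) : 'M[C]_d1 :=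
  \matrix_(i, j) rho (mxtens_index (a, i)) (mxtens_index (b, j)).

Definition id_tens {d1 d2} (n : nat) (Phi : 'M[C]_d1 -> 'M[C]_d2)
  (rho : 'M[C]_(n * d1)) : 'M[C]_(n * d2) :=
  \sum_(a < n) \sum_(b < n) (delta_mx a b *t Phi (blockmx rho a b)).

Definition linear_map {d1 d2} (Phi : 'M[C]_d1 -> 'M[C]_d2) : Prop :=
  forall (c : C) (X Y : 'M[C]_d1), Phi (c *: X + Y) = c *: Phi X + Phi Y.

Definition completely_positive {d1 d2} (Phi : 'M[C]_d1 -> 'M[C]_d2) : Prop :=
  linear_map Phi /\
  forall (n : nat) (rho : 'M[C]_(n * d1)), psdmx rho -> psdmx (@id_tens d1 d2 n Phi rho).

Definition entanglement_breaking {d1 d2} (Phi : 'M[C]_d1 -> 'M[C]_d2) : Prop :=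
  completely_positive Phi /\
  forall (n : nat) (rho : 'M[C]_(n * d1)), statemx rho ->
    separable (@id_tens d1 d2 n Phi rho).

(* The Kraus operators V_i, 0-based: row r <-> e^d_{r+1}, column c <-> e^{d+m}_{c+1},
   index i <-> V_{i+1}.
   For i < d+1: V has a 1 at (r, c) iff c = (r + i) mod (d+1)
     [1-based: column mod(k+i-2, d+1)+1 for row k];
   for d+1 <= i < d+m: V = |J><e_{i+1}|, i.e. column i is all ones. *)
Definition Vop (d m : nat) (i : 'I_(d + m)) : 'M[C]_(d, d + m) :=
  \matrix_(r < d, c < d + m)
    if (i < d.+1)%N then ((c : nat) == ((r + i) %% d.+1)%N)%:R
    else ((c : nat) == (i : nat))%:R.

Definition Phi_op (d m : nat) (X : 'M[C]_d) : 'M[C]_(d + m) :=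
  ((d * (d + m))%:R)^-1 *: \sum_(i < d + m) (adjmx (@Vop d m i) *m X *m @Vop d m i).

End QInfo.

(* Phi is a measure-and-prepare map
     Phi(X) = \sum_t b_t <u_t, X u_t> w_t w_t^*   with b_t >= 0,
   and for such a map
     (id (x) Phi)(rho) = \sum_t b_t (1 (x) u_t)^* rho (1 (x) u_t) (x) w_t w_t^*
   is a sum of tensor products of positive semidefinite matrices.
   The Kraus operators |J><e_i| (i > d+1) are already of this form, with u = J and w = e_i.
   The first d+1 are truncated cyclic shifts; their joint kernel
     \sum_i [c = r + i] [c' = r' + i] = [c - r = c' - r' (mod d+1)]   (c, c' <= d)
   is diagonalised by the Fourier basis: with om a primitive (d+1)-th root of unity it equals
   (d+1)^-1 \sum_k om^(k(r'+c)) conj(om^(k(r+c'))), giving the effects u_k = (om^(kr))_r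
   and the states w_k = (om^(kc))_(c <= d). *)

From HB Require Import structures.
From mathcomp Require Import all_boot all_order all_algebra.
From mathcomp Require Import mxtens.
From mathcomp Require Import cyclic separable cyclotomic.
From mathcomp Require Import ring.
Set Implicit Arguments. Unset Strict Implicit. Unset Printing Implicit Defensive.
Import Order.TTheory GRing.Theory Num.Theory.
Local Open Scope ring_scope.

Lemma sum_indicator (R : pzSemiRingType) (I : finType) (a : I) (F : I -> R) :
  \sum_x ((x == a)%:R * F x) = F a.
Proof.
by rewrite (bigD1 a) //= eqxx mul1r big1 ?addr0 // => x /negbTE ->; rewrite mul0r.
Qed.

Lemma sum_mxtens_index (V : nmodType) p q (F : 'I_(p * q) -> V) :
  \sum_i F i = \sum_x \sum_y F (mxtens_index (x, y)).
Proof.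
rewrite pair_big /= (reindex (@mxtens_index p q)) /=; first by apply: eq_bigr => -[].
by exists (@mxtens_unindex p q) => i _; [apply: mxtens_indexK | apply: mxtens_unindexK].
Qed.

Lemma sum_eqmod_shift (R : pzSemiRingType) n (a b x y : nat) : (0 < n)%N ->
  \sum_(i < n) ((a == x + i %[mod n])%N%:R * (b == y + i %[mod n])%N%:R : R) =
  (a + y == b + x %[mod n])%N%:R.
Proof.
move=> n_gt0; set s := (n - x %% n)%N.
have xs0 : (x + s = 0 %[mod n])%N by rewrite -modnDml subnKC ?modnn ?mod0n // ltnW ?ltn_mod.
have shift_eq e i : (e == x + i %[mod n])%N = (e + s == i %[mod n])%N.
  by rewrite -(eqn_modDr s) addnAC -[((x + s + i) %% n)%N]modnDml xs0 mod0n.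
pose i0 := Ordinal (ltn_pmod (a + s) n_gt0).
rewrite (eq_bigr (fun i => (i == i0)%:R * (b == y + i %[mod n])%N%:R)) => [|i _]; last first.
  by rewrite shift_eq (modn_small (ltn_ord i)) eq_sym.
rewrite sum_indicator /= modnDmr -(eqn_modDr x) -!addnA (addnC s x) addnA.
by rewrite -[((y + a + (x + s)) %% n)%N]modnDmr xs0 mod0n addn0 (addnC y a) eq_sym.
Qed.

Lemma natr_eqn_modn {R : pzSemiRingType} n (e x : nat) : (0 < n)%N ->
  (e == x %% n)%N%:R = (e < n)%N%:R * (e == x %[mod n])%N%:R :> R.
Proof.
move=> n_gt0; case: ltnP => [e_lt | e_ge]; first by rewrite (modn_small e_lt) mul1r.
rewrite mul0r (_ : (e == x %% n)%N = false) //; apply: negbTE.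
by rewrite neq_ltn (leq_trans (ltn_pmod x n_gt0) e_ge) orbT.
Qed.

Lemma sum_cyclic_shift (R : comPzSemiRingType) n (c c' r r' : nat) : (0 < n)%N ->
  \sum_(i < n) ((c == (r + i) %% n)%N%:R * (c' == (r' + i) %% n)%N%:R : R) =
  (c < n)%N%:R * (c' < n)%N%:R * (c + r' == c' + r %[mod n])%N%:R.
Proof.
move=> n_gt0; rewrite -sum_eqmod_shift // mulr_sumr; apply: eq_bigr => i _.
by rewrite (natr_eqn_modn c _ n_gt0) (natr_eqn_modn c' _ n_gt0) mulrACA.
Qed.

Section PositiveSemidefinite.
Variable C : numClosedFieldType.

Lemma adjmxE m n (A : 'M[C]_(m, n)) i j : adjmx A i j = (A j i)^*.
Proof. by rewrite !mxE. Qed.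

Lemma adjmxM m n p (A : 'M[C]_(m, n)) (B : 'M[C]_(n, p)) :
  adjmx (A *m B) = adjmx B *m adjmx A.
Proof. by rewrite /adjmx map_mxM trmx_mul. Qed.

Lemma adjmxK m n (A : 'M[C]_(m, n)) : adjmx (adjmx A) = A.
Proof. by apply/matrixP => i j; rewrite !mxE conjCK. Qed.

Lemma adjmxD m n (A B : 'M[C]_(m, n)) : adjmx (A + B) = adjmx A + adjmx B.
Proof. by apply/matrixP => i j; rewrite !mxE rmorphD. Qed.

Lemma adjmxZ m n (a : C) (A : 'M[C]_(m, n)) : adjmx (a *: A) = a^* *: adjmx A.
Proof. by apply/matrixP => i j; rewrite !mxE rmorphM. Qed.

Lemma mulmx_adjE p q k (U : 'M[C]_(k, p)) (X : 'M[C]_k) (W : 'M[C]_(k, q)) a b :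
  (adjmx U *m X *m W) a b = \sum_r \sum_r' ((U r a)^* * X r r' * W r' b).
Proof.
rewrite mxE exchange_big; apply: eq_bigr => r' _; rewrite mxE mulr_suml.
by apply: eq_bigr => r _; rewrite adjmxE.
Qed.

Lemma psdmx0 n : psdmx (0 : 'M[C]_n).
Proof.
split; first by apply/matrixP => i j; rewrite !mxE rmorph0.
by move=> v; rewrite mulmx0 mul0mx mxE.
Qed.

Lemma psdmxD n (A B : 'M[C]_n) : psdmx A -> psdmx B -> psdmx (A + B).
Proof.
move=> [hA pA] [hB pB]; split; first by rewrite adjmxD hA hB.
by move=> v; rewrite mulmxDr mulmxDl mxE addr_ge0.
Qed.

Lemma psdmx_sum n (I : finType) (F : I -> 'M[C]_n) :
  (forall i, psdmx (F i)) -> psdmx (\sum_i F i).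
Proof. by move=> psdF; apply: big_ind => //; [exact: psdmx0 | exact: psdmxD]. Qed.

Lemma psdmxZ n (a : C) (A : 'M[C]_n) : 0 <= a -> psdmx A -> psdmx (a *: A).
Proof.
move=> a_ge0 [hA pA]; split; first by rewrite adjmxZ hA conj_Creal ?ger0_real.
by move=> v; rewrite -scalemxAr -scalemxAl mxE mulr_ge0.
Qed.

Lemma psdmx_congr n p (M : 'M[C]_(n, p)) (A : 'M[C]_n) :
  psdmx A -> psdmx (adjmx M *m A *m M).
Proof.
move=> [hA pA]; split; first by rewrite !adjmxM adjmxK hA mulmxA.
by move=> v; rewrite -!mulmxA mulmxA -adjmxM mulmxA; apply: pA.
Qed.

Lemma psdmx_congr_adj n p (M : 'M[C]_(p, n)) (A : 'M[C]_n) :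
  psdmx A -> psdmx (M *m A *m adjmx M).
Proof. by move/(psdmx_congr (adjmx M)); rewrite adjmxK. Qed.

Lemma psdmx1 n : psdmx (1%:M : 'M[C]_n).
Proof.
split; first by apply/matrixP => i j; rewrite !mxE rmorph_nat eq_sym.
move=> v; rewrite mulmx1 mxE; apply: sumr_ge0 => i _.
by rewrite adjmxE mulrC mul_conjC_ge0.
Qed.

Lemma psdmx_rank1 n (w : 'cV[C]_n) : psdmx (w *m adjmx w).
Proof. by rewrite -[w in w *m _]mulmx1; apply/psdmx_congr_adj/psdmx1. Qed.

End PositiveSemidefinite.

Section TensorColumn.
Variable C : numClosedFieldType.

(* [1%:M *t u], with [n] rather than [n * 1] columns. *)
Definition tens1_col n k (u : 'cV[C]_k) : 'M[C]_(n * k, n) :=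
  \matrix_(i, a) (((mxtens_unindex i).1 == a)%:R * u (mxtens_unindex i).2 0).

Lemma tens1_colE n k (u : 'cV[C]_k) x y a :
  tens1_col n u (mxtens_index (x, y)) a = (x == a)%:R * u y 0.
Proof. by rewrite mxE mxtens_indexK. Qed.

Lemma tens1_col_congrE n k (u : 'cV[C]_k) (rho : 'M[C]_(n * k)) a b :
  (adjmx (tens1_col n u) *m rho *m tens1_col n u) a b =
  (adjmx u *m blockmx rho a b *m u) 0 0.
Proof.
rewrite !mulmx_adjE sum_mxtens_index (bigD1 a) //= [X in _ + X]big1 ?addr0
  => [|x /negbTE xa]; last first.
  by apply: big1 => y _; apply: big1 => r _; rewrite tens1_colE xa mul0r rmorph0 !mul0r.
apply: eq_bigr => y _; rewrite sum_mxtens_index (bigD1 b) //= [X in _ + X]big1 ?addr0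
  => [|x /negbTE xb].
  by apply: eq_bigr => y' _; rewrite !tens1_colE !eqxx !mul1r mxE.
by apply: big1 => y' _; rewrite !tens1_colE xb mul0r mulr0.
Qed.

Lemma tensmx_rank1 n k (A : 'M[C]_n) (w : 'cV[C]_k) :
  A *t (w *m adjmx w) = tens1_col n w *m A *m adjmx (tens1_col n w).
Proof.
apply/matrixP => i j; case: (mxtens_indexP i) => a c; case: (mxtens_indexP j) => b c'.
rewrite tensmxE -[tens1_col n w]adjmxK mulmx_adjE !adjmxK mxE big_ord1.
rewrite (bigD1 a) //= [X in _ + X]big1 ?addr0 => [|x /negbTE xa]; last first.
  by apply: big1 => y _; rewrite adjmxE conjCK tens1_colE eq_sym xa !mul0r.
rewrite (bigD1 b) //= [X in _ + X]big1 ?addr0 => [|x /negbTE xb]; last first.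
  by rewrite [X in _ * X]adjmxE tens1_colE eq_sym xb mul0r rmorph0 mulr0.
by rewrite !adjmxE !tens1_colE conjCK !eqxx !mul1r mulrCA mulrA.
Qed.

End TensorColumn.

Lemma id_tensE (C : numClosedFieldType) d1 d2 (Phi : 'M[C]_d1 -> 'M[C]_d2) n
    (rho : 'M[C]_(n * d1)) a c b c' :
  id_tens Phi rho (mxtens_index (a, c)) (mxtens_index (b, c')) =
  Phi (blockmx rho a b) c c'.
Proof.
rewrite /id_tens summxE (bigD1 a) //= [X in _ + X]big1 ?addr0 => [|x xa]; last first.
  by rewrite summxE big1 // => y _; rewrite tensmxE mxE eq_sym (negbTE xa) mul0r.
rewrite summxE (bigD1 b) //= [X in _ + X]big1 ?addr0 => [|y yb]; last first.
  by rewrite tensmxE mxE eq_sym (negbTE yb) andbF mul0r.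
by rewrite tensmxE mxE !eqxx mul1r.
Qed.

Section MeasurePrepare.
Variables (C : numClosedFieldType) (I : finType) (d1 d2 : nat).
Variables (u : I -> 'cV[C]_d1) (w : I -> 'cV[C]_d2) (b : I -> C).

Definition measure_prepare (X : 'M[C]_d1) : 'M[C]_d2 :=
  \sum_t ((adjmx (u t) *m X *m u t) 0 0 * b t) *: (w t *m adjmx (w t)).

Lemma measure_prepareE X c c' :
  measure_prepare X c c' =
  \sum_r \sum_r' X r r' * \sum_t b t * ((u t r 0)^* * u t r' 0 * (w t c 0 * (w t c' 0)^*)).
Proof.
rewrite summxE; transitivity (\sum_t \sum_r \sum_r'
    X r r' * (b t * ((u t r 0)^* * u t r' 0 * (w t c 0 * (w t c' 0)^*)))).
  apply: eq_bigr => t _; rewrite mxE mulmx_adjE mxE big_ord1 adjmxE.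
  rewrite -mulrA mulr_suml; apply: eq_bigr => r _.
  rewrite mulr_suml; apply: eq_bigr => r' _.
  ring.
rewrite exchange_big; apply: eq_bigr => r _.
by rewrite exchange_big; apply: eq_bigr => r' _; rewrite mulr_sumr.
Qed.

Lemma measure_prepare_linear : linear_map measure_prepare.
Proof.
move=> a X Y; rewrite /measure_prepare scaler_sumr -big_split; apply: eq_bigr => t _ /=.
rewrite scalerA -scalerDl mulrA -mulrDl mulmxDr mulmxDl -scalemxAr -scalemxAl.
by rewrite [in LHS]mxE [X in X + _]mxE.
Qed.

Definition cond_state n (rho : 'M[C]_(n * d1)) t : 'M[C]_n :=
  b t *: (adjmx (tens1_col n (u t)) *m rho *m tens1_col n (u t)).

Lemma id_tens_measure_prepare n (rho : 'M[C]_(n * d1)) :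
  id_tens measure_prepare rho = \sum_t cond_state rho t *t (w t *m adjmx (w t)).
Proof.
apply/matrixP => i j; case: (mxtens_indexP i) => a c; case: (mxtens_indexP j) => a' c'.
rewrite id_tensE !summxE; apply: eq_bigr => t _.
by rewrite tensmxE [in RHS]mxE tens1_col_congrE [in LHS]mxE [b t * _]mulrC.
Qed.

Hypothesis b_ge0 : forall t, 0 <= b t.

Lemma psdmx_cond_state n (rho : 'M[C]_(n * d1)) t : psdmx rho -> psdmx (cond_state rho t).
Proof. by move=> psd_rho; apply/psdmxZ/psdmx_congr. Qed.

Lemma measure_prepare_entanglement_breaking (Phi : 'M[C]_d1 -> 'M[C]_d2) :
  Phi =1 measure_prepare -> entanglement_breaking Phi.
Proof.
move=> ePhi.
have id_tensPhi n (rho : 'M[C]_(n * d1)) : id_tens Phi rho = id_tens measure_prepare rho.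
  by apply: eq_bigr => a _; apply: eq_bigr => a' _; rewrite ePhi.
split; first split.
- by move=> a X Y; rewrite !ePhi measure_prepare_linear.
- move=> n rho psd_rho; rewrite id_tensPhi id_tens_measure_prepare.
  by apply: psdmx_sum => t; rewrite tensmx_rank1; apply/psdmx_congr_adj/psdmx_cond_state.
move=> n rho [psd_rho _]; rewrite id_tensPhi id_tens_measure_prepare.
exists #|I|, (cond_state rho \o enum_val), (fun k => w (enum_val k) *m adjmx (w (enum_val k))).
split; last exact: (big_enum_val (A := I)).
by move=> k; split; [apply: psdmx_cond_state | apply: psdmx_rank1].
Qed.

End MeasurePrepare.

Lemma prim_root_exists (F : closedFieldType) n :
  (0 < n)%N -> n%:R != 0 :> F -> {z : F | n.-primitive_root z}.
Proof.
move=> n_gt0 n_neq0; pose p : {poly F} := 'X^n - 1.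
have [r Dp] := closed_field_poly_normal p; apply/sigW.
rewrite (monicP _) ?monicXnsubC // scale1r in Dp.
have rn1 : all n.-unity_root r by apply/allP=> z; rewrite -root_prod_XsubC -Dp.
have sz_r : (n < (size r).+1)%N by rewrite -(size_prod_XsubC r id) -Dp size_XnsubC.
have [|z] := hasP (has_prim_root n_gt0 rn1 _ sz_r); last by exists z.
by rewrite -separable_prod_XsubC -Dp separable_Xn_sub_1.
Qed.

Lemma sum_expr_unity_root (R : idomainType) n (z : R) :
  z ^+ n = 1 -> \sum_(k < n) z ^+ k = (z == 1)%:R * n%:R.
Proof.
move=> zn1; have [->|z_neq1] := eqVneq z 1.
  by rewrite mul1r (eq_bigr (fun=> 1)) => [|k _]; rewrite ?expr1n // sumr_const card_ord.
have /esym/eqP := subrX1 z n; rewrite zn1 subrr mulf_eq0 subr_eq0 (negbTE z_neq1).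
by rewrite mul0r => /eqP.
Qed.

Section PrimitiveRoot.
Variables (C : numClosedFieldType) (n : nat) (z : C).
Hypothesis z_prim : n.-primitive_root z.

Lemma prim_root_conj : z^* = z^-1.
Proof.
have n_gt0 := prim_order_gt0 z_prim.
have z_norm : `|z| = 1.
  by apply/eqP; rewrite -(pexpr_eq1 n_gt0) // -normrX prim_expr_order // normr1.
by rewrite invC_norm z_norm expr1n invr1 mul1r.
Qed.

Lemma sum_prim_root_expr_conj a b :
  \sum_(k < n) (z ^+ a) ^+ k * ((z ^+ b) ^+ k)^* = (a == b %[mod n])%:R * n%:R.
Proof.
have zb_neq0 : z ^+ b != 0.
  by rewrite expf_neq0 // (prim_root_eq0 z_prim) -lt0n (prim_order_gt0 z_prim).
rewrite -(eq_prim_root_expr z_prim).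
have -> : (z ^+ a == z ^+ b) = (z ^+ a / z ^+ b == 1).
  by apply/eqP/eqP => [->|/divr1_eq //]; exact: divff.
rewrite -sum_expr_unity_root; last first.
  by rewrite exprMn exprVn !(exprAC _ _ n) (prim_expr_order z_prim) !expr1n invr1 mulr1.
apply: eq_bigr => k _; rewrite rmorphXn /= rmorphXn /= prim_root_conj.
by rewrite exprMn exprVn -!exprM mulnC.
Qed.

End PrimitiveRoot.

Lemma Phi_opE (C : numClosedFieldType) d m (X : 'M[C]_d) c c' :
  Phi_op m X c c' =
  \sum_r \sum_r' X r r' *
    ((d * (d + m))%:R^-1 * \sum_i (@Vop C d m i r c)^* * @Vop C d m i r' c').
Proof.
rewrite mxE summxE mulr_sumr; under eq_bigr => i _ do rewrite mulmx_adjE mulr_sumr.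
rewrite exchange_big; apply: eq_bigr => r _.
under eq_bigr => i _ do rewrite mulr_sumr.
rewrite exchange_big; apply: eq_bigr => r' _; rewrite !mulr_sumr.
apply: eq_bigr => i _.
ring.
Qed.

Section FourierDecomposition.
Variables (C : numClosedFieldType) (d m : nat) (om : C).
Hypotheses (m_gt0 : (0 < m)%N) (om_prim : d.+1.-primitive_root om).
Local Notation n := d.+1.

Definition Phi_effect (t : 'I_n + 'I_(d + m)) : 'cV[C]_d :=
  if t is inl k then \col_r (om ^+ r) ^+ k else const_mx 1.

Definition Phi_state (t : 'I_n + 'I_(d + m)) : 'cV[C]_(d + m) :=
  match t with
  | inl k => \col_c ((c < n)%:R * (om ^+ c) ^+ k)
  | inr i => delta_mx i 0
  end.

(* [inr i] stands for the Kraus operator |J><e_i| when [d < i], and has weight 0 otherwise. *)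
Definition Phi_weight (t : 'I_n + 'I_(d + m)) : C :=
  match t with inl _ => n%:R^-1 | inr i => (n <= i)%:R end.

Lemma Vop_kernel_shift (r r' : 'I_d) (c c' : 'I_(d + m)) :
  \sum_(i < d + m | (i < n)%N) (@Vop C d m i r c)^* * @Vop C d m i r' c' =
  \sum_k Phi_weight (inl k) * ((Phi_effect (inl k) r 0)^* * Phi_effect (inl k) r' 0 *
                   (Phi_state (inl k) c 0 * (Phi_state (inl k) c' 0)^*)).
Proof.
have le_n : (n <= d + m)%N by rewrite -addn1 leq_add2l.
pose shift_term i : C :=
  ((c : nat) == (r + i) %% n)%N%:R * ((c' : nat) == (r' + i) %% n)%N%:R.
rewrite (eq_bigr (fun i : 'I_(d + m) => shift_term i)) => [|i i_lt]; last first.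
  by rewrite !mxE i_lt rmorph_nat.
rewrite -(big_ord_widen _ shift_term le_n) sum_cyclic_shift //.
rewrite (eq_bigr (fun k : 'I_n => n%:R^-1 * ((c < n)%N%:R * (c' < n)%N%:R) *
    ((om ^+ (r' + c)) ^+ k * ((om ^+ (r + c')) ^+ k)^*))) => [|k _]; last first.
  rewrite !mxE !exprD !exprMn !rmorphM /= rmorph_nat.
  ring.
rewrite -mulr_sumr (sum_prim_root_expr_conj om_prim) (addnC r') (addnC r).
field.
by rewrite nat1r pnatr_eq0.
Qed.

Lemma Vop_kernel_ones (r r' : 'I_d) (c c' : 'I_(d + m)) :
  \sum_(i < d + m | ~~ (i < n)%N) (@Vop C d m i r c)^* * @Vop C d m i r' c' =
  \sum_i Phi_weight (inr i) * ((Phi_effect (inr i) r 0)^* * Phi_effect (inr i) r' 0 *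
                   (Phi_state (inr i) c 0 * (Phi_state (inr i) c' 0)^*)).
Proof.
rewrite big_mkcond; apply: eq_bigr => i _; rewrite /= !mxE.
case: ltnP => [i_lt | i_ge] /=; first by rewrite mul0r.
by rewrite !andbT !rmorph_nat conjC1 !mul1r.
Qed.

Lemma Vop_kernel (r r' : 'I_d) (c c' : 'I_(d + m)) :
  \sum_i (@Vop C d m i r c)^* * @Vop C d m i r' c' =
  \sum_t Phi_weight t * ((Phi_effect t r 0)^* * Phi_effect t r' 0 *
                         (Phi_state t c 0 * (Phi_state t c' 0)^*)).
Proof.
rewrite (bigID (fun i : 'I_(d + m) => (i < n)%N)) big_sumType /=.
by rewrite Vop_kernel_shift Vop_kernel_ones.
Qed.

Lemma Phi_weight_ge0 t : 0 <= (d * (d + m))%:R^-1 * Phi_weight t.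
Proof. by rewrite mulr_ge0 ?invr_ge0 //; case: t => *; rewrite ?invr_ge0 ler0n. Qed.

Lemma Phi_op_measure_prepare : Phi_op m =1
  measure_prepare Phi_effect Phi_state (fun t => (d * (d + m))%:R^-1 * Phi_weight t).
Proof.
move=> X; apply/matrixP => c c'; rewrite Phi_opE measure_prepareE.
apply: eq_bigr => r _; apply: eq_bigr => r' _; rewrite Vop_kernel; congr (_ * _).
by rewrite mulr_sumr; apply: eq_bigr => t _; exact: mulrA.
Qed.

End FourierDecomposition.

Theorem mainTheorem3 (C : numClosedFieldType) (d m : nat) :
  (2 <= d)%N -> (1 <= m)%N -> entanglement_breaking (@Phi_op C d m).
Proof.
move=> _ m_gt0.
have n_neq0 : d.+1%:R != 0 :> C by rewrite pnatr_eq0.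
have [om om_prim] := prim_root_exists (ltn0Sn d) n_neq0.
apply: measure_prepare_entanglement_breaking (Phi_op_measure_prepare m_gt0 om_prim).
exact: Phi_weight_ge0.
Qed.
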